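(* For every Dale matrix $W\in\mathbb{D}_n$ satisfying the Ground Assumption, the code $\mathcal{C}(W)$ is intersection-complete (if $\sigma,\nu\in\mathcal{C}(W)$ then $\sigma\cap\nu\in\mathcal{C}(W)$), and consequently $\mathcal{C}(W)$ is an open convex code.
   Context: Threshold-linear network: $\dot x_i=-x_i+[\sum_j W_{ij}x_j+b_i]_+$ with $[y]_+=\max(0,y)$; a fixed point is $x^*$ with $x^*=[Wx^*+b]_+$. A Dale matrix $W\in\mathbb{D}_n$ is an $n\times n$ real matrix with a partition $[n]=\mathcal{E}\sqcup\mathcal{I}$ such that $W_{ii}=0$, $W_{ji}\ge0$ for all $j$ if $i\in\mathcal{E}$, $W_{ji}\le0$ for all $j$ if $i\in\mathcal{I}$. Ground Assumption: $(I-W)_\sigma$ nonsingular for every nonempty $\sigma\subset[n]$. Excitatory support: $\mathrm{supp}_+x=\{i\in\mathcal{E}:x_i>0\}$. Combinatorial code: $\mathcal{C}(W)=\{\mathrm{supp}_+x^*: b\in\mathbb{R}^n_{\ge0},\ x^*\in\mathbb{R}^n_{\ge0}\text{ a fixed point of }(W,b)\}\subset 2^\mathcal{E}$. For a collection $\mathcal{U}=\{U_i\}_{i\in\mathcal{E}}$ of subsets of $\mathbb{R}^d$, $\mathrm{code}(\mathcal{U})=\{\sigma\subset\mathcal{E}: (\bigcap_{i\in\sigma}U_i)\setminus\bigcup_{j\notin\sigma}U_j\neq\varnothing\}$ (with $\bigcap_{i\in\varnothing}U_i=\mathbb{R}^d$). A code $\mathcal{C}\subset 2^{\mathcal{E}}$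 is open convex if $\mathcal{C}=\mathrm{code}(\mathcal{U})$ for some collection $\mathcal{U}$ of open convex subsets of some $\mathbb{R}^d$, $d\ge1$. *)

From HB Require Import structures.
From mathcomp Require Import all_boot all_order all_algebra.
From mathcomp Require Import all_classical all_reals all_analysis.
Set Implicit Arguments. Unset Strict Implicit. Unset Printing Implicit Defensive.
Import Order.TTheory GRing.Theory Num.Theory.
Import numFieldNormedType.Exports.
Local Open Scope classical_set_scope.
Local Open Scope ring_scope.

Definition dale (R : realType) (n : nat) (W : 'M[R]_n) (E : {set 'I_n}) : Prop :=
  (forall i : 'I_n, W i i = 0) /\
  (forall i j : 'I_n, i \in E -> 0 <= W j i) /\
  (forall i j : 'I_n, i \notin E -> W j i <= 0).

Definition principal_submx (R : realType) (n : nat) (A : 'M[R]_n)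
    (sigma : {set 'I_n}) : 'M[R]_#|sigma| :=
  \matrix_(k < #|sigma|, l < #|sigma|)
     A (@enum_val _ (mem sigma) k) (@enum_val _ (mem sigma) l).

Definition ground_assumption (R : realType) (n : nat) (W : 'M[R]_n) : Prop :=
  forall sigma : {set 'I_n}, sigma != finset.set0 ->
    \det (principal_submx (1%:M - W) sigma) != 0.

Definition tln_fixed_point (R : realType) (n : nat) (W : 'M[R]_n)
    (b x : 'cV[R]_n) : Prop :=
  forall i : 'I_n, x i 0 = Num.max 0 ((W *m x) i 0 + b i 0).

Definition supp_plus (R : realType) (n : nat) (E : {set 'I_n}) (x : 'cV[R]_n)
  : {set 'I_n} := [set i in E | 0 < x i 0].

Definition tln_code (R : realType) (n : nat) (W : 'M[R]_n) (E : {set 'I_n})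
  : {set 'I_n} -> Prop :=
  fun sigma => exists b x : 'cV[R]_n,
    (forall i, 0 <= b i 0) /\ (forall i, 0 <= x i 0) /\
    tln_fixed_point W b x /\ sigma = supp_plus E x.

Definition intersection_complete (n : nat) (C : {set 'I_n} -> Prop) : Prop :=
  forall sigma nu, C sigma -> C nu -> C (sigma :&: nu).

Definition code_of (R : realType) (n d : nat) (E : {set 'I_n})
    (U : 'I_n -> set 'rV[R]_d) : {set 'I_n} -> Prop :=
  fun sigma => sigma \subset E /\
    exists p : 'rV[R]_d, (forall i, i \in sigma -> U i p) /\
                         (forall j, j \in E -> j \notin sigma -> ~ U j p).

Definition open_convex_code (R : realType) (n : nat) (E : {set 'I_n})
    (C : {set 'I_n} -> Prop) : Prop :=
  exists (d : nat) (U : 'I_n -> set 'rV[R]_d), (1 <= d)%N /\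
    (forall i, i \in E -> open (U i) /\ convex_set (U i)) /\
    (forall sigma, C sigma <-> code_of E U sigma).

From HB Require Import structures.
From mathcomp Require Import all_boot all_order all_algebra.
From mathcomp Require Import all_classical all_reals all_analysis.
Set Implicit Arguments. Unset Strict Implicit. Unset Printing Implicit Defensive.
Import Order.TTheory GRing.Theory Num.Theory.
Import numFieldNormedType.Exports.
Local Open Scope classical_set_scope.
Local Open Scope ring_scope.

(* Proof plan.
   1. Since the input b >= 0 is free, x >= 0 is a fixed point of (W, b) for
      some b >= 0 exactly when W x <= x (take b = x - W x).  So C(W) is the
      set of excitatory supports of the nonnegative "subfixed" vectors.
   2. Subfixed vectors form a convex cone, hence C(W) contains the empty set
      and is closed under unions (add the vectors).  For a Dale matrix it is
      also closed under intersections: take the minimum of two subfixed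
      vectors on excitatory neurons and the maximum on inhibitory ones; W
      then sends it below both images since excitatory columns are >= 0 and
      inhibitory columns are <= 0.
   3. A purely combinatorial-geometric fact: a code on E containing the empty
      set and closed under unions and intersections is open convex.  With
      m_i the least codeword containing i, take U_i to be the open orthant
      face { p | p_j > 0 for j in m_i } (empty if i is in no codeword); the
      codewords are exactly the unions of the m_i, which are the sets
      realized by the points with coordinates +1/-1. *)

Section NetworkCode.
Variables (R : realType) (n : nat) (W : 'M[R]_n) (E : {set 'I_n}).

Definition subfixed (x : 'cV[R]_n) : Prop :=
  (forall i, 0 <= x i 0) /\ (forall i, (W *m x) i 0 <= x i 0).

Lemma tln_codeE sigma :
  tln_code W E sigma <-> exists x, subfixed x /\ sigma = supp_plus E x.
Proof.
split=> [[b [x [b_ge0 [x_ge0 [fx ->]]]]]|[x [[x_ge0 Wx_le] ->]]].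
  exists x; split=> //; split=> // i.
  by rewrite fx le_max lerDl b_ge0 orbT.
exists (\col_i (x i 0 - (W *m x) i 0)), x; split.
  by move=> i; rewrite mxE subr_ge0.
do 2!split=> //; move=> i.
by rewrite [X in _ + X]mxE addrC subrK; apply/esym/max_idPr.
Qed.

Lemma tln_code_sub sigma : tln_code W E sigma -> sigma \subset E.
Proof.
move=> /tln_codeE [x [_ ->]].
by apply/fintype.subsetP=> i; rewrite inE => /andP[].
Qed.

Lemma tln_code0 : tln_code W E finset.set0.
Proof.
apply/tln_codeE; exists 0; split; first by split=> i; rewrite ?mulmx0 mxE.
by apply/setP=> i; rewrite !inE mxE ltxx andbF.
Qed.

(* The sum of subfixed vectors is subfixed, with the union of the supports. *)
Lemma tln_codeU sigma nu :
  tln_code W E sigma -> tln_code W E nu -> tln_code W E (sigma :|: nu).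
Proof.
move=> /tln_codeE [x [[x_ge0 Wx_le] ->]] /tln_codeE [y [[y_ge0 Wy_le] ->]].
apply/tln_codeE; exists (x + y); split.
  split=> i; first by rewrite mxE addr_ge0.
  by rewrite mulmxDr [X in X <= _]mxE [X in _ <= X]mxE lerD.
apply/setP=> i; rewrite !inE mxE -andb_orr; congr (_ && _).
by rewrite !lt_def paddr_eq0 ?addr_ge0 // x_ge0 y_ge0 negb_and !andbT.
Qed.

Definition dale_meet (x y : 'cV[R]_n) : 'cV[R]_n :=
  \col_i (if i \in E then Num.min (x i 0) (y i 0) else Num.max (x i 0) (y i 0)).

Hypothesis W_dale : dale W E.

(* W is monotone along excitatory coordinates and antitone along inhibitory
   ones, so W maps dale_meet x y below W x. *)
Lemma dale_meet_image x y i : (W *m dale_meet x y) i 0 <= (W *m x) i 0.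
Proof.
have [_ [colE colI]] := W_dale.
rewrite !mxE; apply: ler_sum => j _; rewrite mxE; case: ifP => jE.
- by apply: ler_wpM2l; [exact: colE | rewrite ge_min lexx].
- by apply: ler_wnM2l; [apply: colI; rewrite jE | rewrite le_max lexx].
Qed.

Lemma dale_meet_sym x y : dale_meet x y = dale_meet y x.
Proof. by apply/matrixP=> i j; rewrite !mxE minC maxC. Qed.

(* For a Dale matrix, dale_meet x y is subfixed when x and y are, and its
   excitatory support is the intersection of theirs. *)
Lemma tln_codeI sigma nu :
  tln_code W E sigma -> tln_code W E nu -> tln_code W E (sigma :&: nu).
Proof.
move=> /tln_codeE [x [[x_ge0 Wx_le] ->]] /tln_codeE [y [[y_ge0 Wy_le] ->]].
apply/tln_codeE; exists (dale_meet x y); split; first split=> i.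
- by rewrite mxE; case: ifP=> _; rewrite ?le_min ?le_max x_ge0 ?y_ge0.
- have lex := le_trans (dale_meet_image x y i) (Wx_le i).
  have ley := le_trans (dale_meet_image y x i) (Wy_le i).
  rewrite dale_meet_sym in ley.
  by rewrite [X in _ <= X]mxE; case: ifP=> _; rewrite ?le_min ?le_max lex ?ley.
- apply/setP=> i; rewrite !inE mxE; case: (i \in E)=> //=.
  by rewrite lt_min.
Qed.

End NetworkCode.

(* Step 3, geometric part: open orthant faces of R^(n+1); the coordinates
   after the first one are indexed by 'I_n.  The extra coordinate keeps the
   dimension positive. *)
Section OrthantFaces.
Variables (R : realType) (n : nat).

Definition pos_face (S : {set 'I_n}) : set 'rV[R]_n.+1 :=
  [set p | forall j, j \in S -> 0 < p ord0 (lift ord0 j)].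

Lemma open_pos_face S : open (pos_face S).
Proof.
rewrite openE => p p_pos.
suff : \forall q \near p, forall j, j \in S ->
    0 < (q : 'rV[R]_n.+1) ord0 (lift ord0 j) by [].
pose halfspace j := [set q : 'rV[R]_n.+1 | j \in S -> 0 < q ord0 (lift ord0 j)].
apply: (@filter_forall _ _ halfspace (nbhs p) (nbhs_filter p)) => j.
case: (boolP (j \in S)) => jS; last first.
  by apply: nearW => q; rewrite /halfspace /= => /(negP jS).
have coord_open : open [set q : 'rV[R]_n.+1 | 0 < q ord0 (lift ord0 j)].
  apply: (@open_comp _ _ (fun q : 'rV[R]_n.+1 => q ord0 (lift ord0 j))
    [set x : R | 0 < x]).
    by move=> q _; apply: coord_continuous.
  exact: open_gt.
apply: filterS (open_nbhs_nbhs (conj coord_open (p_pos j jS))).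
by move=> q q_pos _.
Qed.

Lemma convex_pos_face S : convex_set (pos_face S).
Proof.
move=> x y t; rewrite !inE => x_pos y_pos j jS.
by have := convR_gt0 t (x_pos j jS) (y_pos j jS); rewrite /= !mxE.
Qed.

Definition sign_point (s : {set 'I_n}) : 'rV[R]_n.+1 :=
  \row_k (if unlift ord0 k is Some j then (if j \in s then 1 else -1) else 0).

Lemma pos_face_sign_point S s : pos_face S (sign_point s) <-> S \subset s.
Proof.
have coordE j : sign_point s ord0 (lift ord0 j) = if j \in s then 1 else -1.
  by rewrite mxE liftK.
split=> [S_pos | /fintype.subsetP Ss j jS].
  apply/fintype.subsetP => j /S_pos; rewrite coordE.
  by case: (j \in s) => //; rewrite ltr0N1.
by rewrite coordE Ss.
Qed.

End OrthantFaces.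

Section LatticeCode.
Variables (R : realType) (n : nat) (E : {set 'I_n}) (C : {set 'I_n} -> Prop).
Hypotheses (C0 : C finset.set0) (C_sub : forall c, C c -> c \subset E).
Hypothesis CU : forall c d, C c -> C d -> C (c :|: d).
Hypothesis CI : forall c d, C c -> C d -> C (c :&: d).

Definition covered (i : 'I_n) : Prop := exists c, C c /\ i \in c.

Definition least_codeword (i : 'I_n) : {set 'I_n} :=
  \bigcap_(c | `[< C c >] && (i \in c)) c.

Lemma least_codeword_min i c : C c -> i \in c -> least_codeword i \subset c.
Proof.
by move=> Cc ic; apply: finset.bigcap_inf; rewrite ic andbT; apply/asboolP.
Qed.

Lemma least_codeword_mem i : i \in least_codeword i.
Proof. by apply/finset.bigcapP => c /andP[]. Qed.

(* A nonempty finite intersection of codewords is a codeword. *)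
Lemma least_codeword_code i : covered i -> C (least_codeword i).
Proof.
move=> [c [Cc ic]]; have /finset.setIidPr <- := least_codeword_min Cc ic.
apply: (big_ind (fun X => C (c :&: X))); first by rewrite finset.setIT.
  move=> X Y CX CY; have -> : c :&: (X :&: Y) = (c :&: X) :&: (c :&: Y).
    by rewrite finset.setIACA finset.setIid.
  exact: CI.
by move=> d /andP[/asboolP Cd _]; apply: CI.
Qed.

(* Intersection-closedness makes the least codewords nested. *)
Lemma least_codeword_mono i k :
  covered i -> k \in least_codeword i ->
  least_codeword k \subset least_codeword i.
Proof. by move=> /least_codeword_code Cm km; apply: least_codeword_min. Qed.

Definition face_cover (i : 'I_n) : set 'rV[R]_n.+1 :=
  if `[< covered i >] then @pos_face R n (least_codeword i) else set0.

Lemma face_coverE i p :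
  face_cover i p <-> covered i /\ @pos_face R n (least_codeword i) p.
Proof. by rewrite /face_cover; case: asboolP => [cov|uncov]; split=> [|[]]. Qed.

(* A codeword s is realized by its sign point. *)
Lemma codeword_realized s : C s -> code_of E face_cover s.
Proof.
move=> Cs; split; first exact: C_sub.
exists (@sign_point R n s); split=> [i is_ | j _ js /face_coverE[cov_j]].
  apply/face_coverE; split; first by exists s.
  exact/pos_face_sign_point/least_codeword_min.
move/pos_face_sign_point/fintype.subsetP/(_ j (least_codeword_mem j)).
by rewrite (negbTE js).
Qed.

(* A realized set is the union of the least codewords of its elements. *)
Lemma realized_codeword s : code_of E face_cover s -> C s.
Proof.
move=> [_ [p [in_U out_U]]].
have -> : s = (\bigcup_(i in s) least_codeword i)%SET.
  apply/setP => k; apply/idP/finset.bigcupP => [ks | [i is_ ki]].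
    by exists k => //; exact: least_codeword_mem.
  have /face_coverE [cov_i p_i] := in_U i is_.
  apply/negPn/negP => ks; apply: (out_U k _ ks).
    exact: fintype.subsetP (C_sub (least_codeword_code cov_i)) _ ki.
  have cov_k : covered k.
    by exists (least_codeword i); split=> //; exact: least_codeword_code.
  have /fintype.subsetP nested := least_codeword_mono cov_i ki.
  by apply/face_coverE; split=> // j /nested; exact: p_i.
apply: (big_ind C) => //.
by move=> i /in_U /face_coverE [cov_i _]; exact: least_codeword_code.
Qed.

Lemma lattice_code_open_convex : open_convex_code R E C.
Proof.
exists n.+1, face_cover; split=> //; split.
  move=> i _; rewrite /face_cover; case: asboolP => _.
    by split; [exact: open_pos_face | exact: convex_pos_face].
  by split=> [|x y t]; [exact: open0 | rewrite in_set0].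
by move=> s; split; [exact: codeword_realized | exact: realized_codeword].
Qed.

End LatticeCode.

Theorem mainTheorem7 (R : realType) (n : nat) (W : 'M[R]_n) (E : {set 'I_n}) :
  dale W E -> ground_assumption W ->
  intersection_complete (tln_code W E) /\ open_convex_code R E (tln_code W E).
Proof.
move=> W_dale _.
have codeI : intersection_complete (tln_code W E) by exact: tln_codeI.
split=> //; apply: lattice_code_open_convex => //.
- exact: tln_code0.
- exact: tln_code_sub.
- exact: tln_codeU.
Qed.
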